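(* Let $M$ be an interpretation and $\varphi$ an $\mathcal{ALC}$-formula. Then $\mathrm{Mod}(\varphi)\setminus[M]_\varphi=\mathrm{Mod}(\mathcal{C}(\varphi,M))$.
   Context: $\mathcal{ALC}$ concepts: $C::=A\mid\neg C\mid(C\sqcap C)\mid\exists r.C$. $\mathcal{ALC}$-formulae: $\phi::=\alpha\mid\neg\phi\mid(\phi\wedge\phi)$, atomic $\alpha::=C(a)\mid r(a,b)\mid(C=\top)$; $\neg\neg\psi$ identified with $\psi$; $\vee,\bot$ usual abbreviations. A literal is an atomic formula or its negation. Interpretations: countable nonempty domain, standard semantics; $\mathrm{Mod}(\varphi)$: interpretations satisfying $\varphi$. $\mathrm{Sub}(\alpha)=\mathrm{Sub}(\neg\alpha)=\{\alpha,\neg\alpha\}$ for atomic $\alpha$; $\mathrm{Sub}(\psi\wedge\psi')=\mathrm{Sub}(\neg(\psi\wedge\psi'))=\{\psi\wedge\psi',\neg(\psi\wedge\psi')\}\cup\mathrm{Sub}(\psi)\cup\mathrm{Sub}(\psi')$. $\mathrm{con}(\varphi)$: smallest set of concepts containing $C$ whenever $(C=\top)$ or $C(a)$ is in $\mathrm{Sub}(\varphi)$, closed under subconcepts of $\sqcap$, $\exists r.\cdot$, and single negation. $\mathrm{ind}(\varphi)$: individual names in $\varphi$. Concept type: $c\subseteq\mathrm{con}(\varphi)$ with $D\in c$ iff $\neg D\notin c$, $D\sqcap E\in c$ iff $\{D,E\}\subseteq c$. Formula type for $\varphi$: $f\subseteq\mathrm{Sub}(\varphi)$ with $\psi\in f$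 iff $\neg\psi\notin f$, $\psi\wedge\psi'\in f$ iff $\{\psi,\psi'\}\subseteq f$. Model candidate $(T,o,f)$: $T$ set of concept types, $o:\mathrm{ind}(\varphi)\to T$, $f$ formula type with $\varphi\in f$, $C(a)\in f\Rightarrow C\in o(a)$, $r(a,b)\in f\Rightarrow\{\neg C\mid\neg\exists r.C\in o(a)\}\subseteq o(b)$. Quasimodel: model candidate where each $\exists r.D\in c\in T$ has $c'\in T$ with $\{D\}\cup\{\neg E\mid\neg\exists r.E\in c\}\subseteq c'$; $\neg C\in c\in T$ implies $(C=\top)\notin f$; $\neg(C=\top)\in f$ implies some $c\in T$ has $C\notin c$; $T\ne\emptyset$. $\mathrm{ftypes}(\varphi)=\{f\mid(T,o,f)$ quasimodel for $\varphi\}$. $\mathrm{qm}(\varphi,I)=(T,o,f)$ with $T=\{c(x)\mid x\in\Delta^I\}$, $c(x)=\{C\in\mathrm{con}(\varphi)\mid x\in C^I\}$, $o(a)=c(a^I)$, $f=\{\psi\in\mathrm{Sub}(\varphi)\mid I\models\psi\}$. $\mathrm{lit}(f)$: literals in $f$. $\mathrm{qfilter}(\varphi,M)=\mathrm{ftypes}(\varphi)\setminus\{f\}$ where $\mathrm{qm}(\varphi,M)=(T,o,f)$. $\mathcal{C}(\varphi,M)=\bigvee_{f\in\mathrm{qfilter}(\varphi,M)}\bigwedge\mathrm{lit}(f)$ if $M\models\varphi$ and $\mathrm{qfilter}(\varphi,M)\ne\emptyset$; $\bot$ if $M\models\varphi$ and $\mathrm{qfilter}(\varphi,M)=\emptyset$;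 $\varphi$ otherwise. $\mathcal{L}_{lit}(\varphi)$: Boolean combinations of atomic formulae occurring in $\varphi$; $M'\equiv_\varphi M$ iff they satisfy the same formulae of $\mathcal{L}_{lit}(\varphi)$; $[M]_\varphi=\{M'\mid M'\equiv_\varphi M\}$. *)

From Stdlib Require Import List Classical ClassicalDescription.
Import ListNotations.

Inductive concept : Type :=
| CAtom (A : nat)
| CNeg (C : concept)
| CAnd (C D : concept)
| CEx (r : nat) (C : concept).

(* atomic formulae: C(a), r(a,b), (C = T) *)
Inductive atom : Type :=
| AConc (C : concept) (a : nat)
| ARole (r a b : nat)
| ATop (C : concept).

Inductive formula : Type :=
| FAtom (al : atom)
| FNeg (p : formula)
| FAnd (p q : formula).

Record interp : Type := {
  dom : Type;
  dom_inhabited : inhabited dom;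
  dom_countable : exists f : dom -> nat, forall x y, f x = f y -> x = y;
  conc_int : nat -> dom -> Prop;
  role_int : nat -> dom -> dom -> Prop;
  ind_int : nat -> dom }.

Fixpoint cint (I : interp) (C : concept) (x : dom I) : Prop :=
  match C with
  | CAtom A => conc_int I A x
  | CNeg C' => ~ cint I C' x
  | CAnd C1 C2 => cint I C1 x /\ cint I C2 x
  | CEx r C' => exists y, role_int I r x y /\ cint I C' y
  end.

Definition sat_atom (I : interp) (al : atom) : Prop :=
  match al with
  | AConc C a => cint I C (ind_int I a)
  | ARole r a b => role_int I r (ind_int I a) (ind_int I b)
  | ATop C => forall x, cint I C x
  end.

Fixpoint sat (I : interp) (p : formula) : Prop :=
  match p with
  | FAtom al => sat_atom I al
  | FNeg q => ~ sat I q
  | FAnd q1 q2 => sat I q1 /\ sat I q2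
  end.

Definition Mod (phi : formula) (I : interp) : Prop := sat I phi.

Definition fneg (p : formula) : formula :=
  match p with FNeg q => q | _ => FNeg p end.
Definition cneg (C : concept) : concept :=
  match C with CNeg D => D | _ => CNeg C end.

(* normal form modulo the identification  ~~psi = psi *)
Fixpoint nf (p : formula) : formula :=
  match p with
  | FAtom al => FAtom al
  | FNeg q => fneg (nf q)
  | FAnd q1 q2 => FAnd (nf q1) (nf q2)
  end.

Fixpoint sub_list (p : formula) : list formula :=
  match p with
  | FAtom al => [FAtom al; FNeg (FAtom al)]
  | FNeg q => sub_list q
  | FAnd q1 q2 => [FAnd q1 q2; FNeg (FAnd q1 q2)] ++ sub_list q1 ++ sub_list q2
  end.
Definition Sub (phi : formula) : list formula := sub_list (nf phi).

Fixpoint atoms_of (p : formula) : list atom :=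
  match p with
  | FAtom al => [al]
  | FNeg q => atoms_of q
  | FAnd q1 q2 => atoms_of q1 ++ atoms_of q2
  end.

Inductive con (phi : formula) : concept -> Prop :=
| con_conc : forall C a, In (FAtom (AConc C a)) (Sub phi) -> con phi C
| con_top : forall C, In (FAtom (ATop C)) (Sub phi) -> con phi C
| con_andl : forall C D, con phi (CAnd C D) -> con phi C
| con_andr : forall C D, con phi (CAnd C D) -> con phi D
| con_ex : forall r C, con phi (CEx r C) -> con phi C
| con_negsub : forall C, con phi (CNeg C) -> con phi C
| con_neg : forall C, con phi C -> con phi (cneg C).

Definition atom_mentions (al : atom) (a : nat) : Prop :=
  match al with
  | AConc _ b => a = b
  | ARole _ b c => a = b \/ a = c
  | ATop _ => False
  end.
Definition ind (phi : formula) (a : nat) : Prop :=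
  exists al, In al (atoms_of phi) /\ atom_mentions al a.

Definition concept_type (phi : formula) (c : concept -> Prop) : Prop :=
  (forall D, c D -> con phi D) /\
  (forall D, con phi D -> (c D <-> ~ c (cneg D))) /\
  (forall D E, con phi (CAnd D E) -> (c (CAnd D E) <-> c D /\ c E)).

Definition formula_type (phi : formula) (f : formula -> Prop) : Prop :=
  (forall p, f p -> In p (Sub phi)) /\
  (forall p, In p (Sub phi) -> (f p <-> ~ f (fneg p))) /\
  (forall p q, In (FAnd p q) (Sub phi) -> (f (FAnd p q) <-> f p /\ f q)).

Definition model_candidate (phi : formula) (T : (concept -> Prop) -> Prop)
    (o : nat -> concept -> Prop) (f : formula -> Prop) : Prop :=
  (forall c, T c -> concept_type phi c) /\
  (forall a, ind phi a -> T (o a)) /\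
  formula_type phi f /\
  f (nf phi) /\
  (forall C a, f (FAtom (AConc C a)) -> o a C) /\
  (forall r a b, f (FAtom (ARole r a b)) ->
     forall C, o a (CNeg (CEx r C)) -> o b (cneg C)).

Definition quasimodel (phi : formula) (T : (concept -> Prop) -> Prop)
    (o : nat -> concept -> Prop) (f : formula -> Prop) : Prop :=
  model_candidate phi T o f /\
  (forall c, T c -> forall r D, c (CEx r D) ->
     exists c', T c' /\ c' D /\ (forall E, c (CNeg (CEx r E)) -> c' (cneg E))) /\
  (forall c C, T c -> c (cneg C) -> ~ f (FAtom (ATop C))) /\
  (forall C, f (FNeg (FAtom (ATop C))) -> exists c, T c /\ ~ c C) /\
  (exists c, T c).

Definition ftypes (phi : formula) (f : formula -> Prop) : Prop :=
  exists T o, quasimodel phi T o f.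

Definition qm_T (phi : formula) (I : interp) (c : concept -> Prop) : Prop :=
  exists x : dom I, forall C, c C <-> (con phi C /\ cint I C x).
Definition qm_o (phi : formula) (I : interp) (a : nat) (C : concept) : Prop :=
  con phi C /\ cint I C (ind_int I a).
Definition qm_f (phi : formula) (I : interp) (p : formula) : Prop :=
  In p (Sub phi) /\ sat I p.

Definition qfilter (phi : formula) (M : interp) (f : formula -> Prop) : Prop :=
  ftypes phi f /\ ~ (forall p, f p <-> qm_f phi M p).

Definition fbot : formula :=
  FAnd (FAtom (ATop (CAtom 0))) (FNeg (FAtom (ATop (CAtom 0)))).
Definition ftop : formula := FNeg fbot.
Definition for_ (p q : formula) : formula := fneg (FAnd (fneg p) (fneg q)).

Fixpoint bigAnd (l : list formula) : formula :=
  match l with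
  | [] => ftop
  | [p] => p
  | p :: l' => FAnd p (bigAnd l')
  end.
Fixpoint bigOr (l : list formula) : formula :=
  match l with
  | [] => fbot
  | [p] => p
  | p :: l' => for_ p (bigOr l')
  end.

Definition is_literal (p : formula) : bool :=
  match p with
  | FAtom _ => true
  | FNeg (FAtom _) => true
  | _ => false
  end.

(* /\ lit(f), for a formula type given by a list of its elements *)
Definition lit_conj (S : list formula) : formula := bigAnd (filter is_literal S).

Fixpoint sublists {A : Type} (l : list A) : list (list A) :=
  match l with
  | [] => [[]]
  | x :: l' => let r := sublists l' in map (cons x) r ++ r
  end.

(* an enumeration of qfilter(phi,M): every formula type is a subset of Sub(phi),
   hence the set of elements of some sublist of Sub(phi) *)
Definition qfilter_list (phi : formula) (M : interp) : list (list formula) :=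
  filter (fun S => if excluded_middle_informative (qfilter phi M (fun p => In p S))
                   then true else false)
         (sublists (Sub phi)).

Definition Ccal (phi : formula) (M : interp) : formula :=
  if excluded_middle_informative (sat M phi) then
    match qfilter_list phi M with
    | [] => fbot
    | L => bigOr (map lit_conj L)
    end
  else phi.

Definition L_lit (phi : formula) (p : formula) : Prop :=
  forall al, In al (atoms_of p) -> In al (atoms_of phi).
Definition lit_equiv (phi : formula) (M' M : interp) : Prop :=
  forall p, L_lit phi p -> (sat M' p <-> sat M p).

(* A formula type f for phi is determined by its literals: an interpretation I
   satisfies /\lit(f) exactly when f is the set of subformulae of phi true in I,
   the formula type of qm(phi, I).  Hence, when M |= phi, I |= C(phi, M) iff the
   formula type of I lies in qfilter(phi, M), i.e. iff it is realised by some
   quasimodel (which happens iff I |= phi, qm(phi, I) being one) and differs from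
   that of M (which happens iff I and M disagree on some atom of phi). *)

From Stdlib Require Import List Classical ClassicalDescription FunctionalExtensionality PropExtensionality.
Import ListNotations.

Lemma sat_fneg I p : sat I (fneg p) <-> ~ sat I p.
Proof. destruct p; simpl; tauto. Qed.

Lemma cint_cneg I C x : cint I (cneg C) x <-> ~ cint I C x.
Proof. destruct C; simpl; tauto. Qed.

Lemma sat_nf I p : sat I (nf p) <-> sat I p.
Proof. induction p; simpl; rewrite ?sat_fneg; tauto. Qed.

Lemma atoms_of_fneg p : atoms_of (fneg p) = atoms_of p.
Proof. destruct p; reflexivity. Qed.

Lemma atoms_of_nf p : atoms_of (nf p) = atoms_of p.
Proof. induction p; simpl; rewrite ?atoms_of_fneg; congruence. Qed.

Lemma pred_ext {A : Type} (f g : A -> Prop) : (forall x, f x <-> g x) -> f = g.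
Proof.
  intros Hfg; apply functional_extensionality; intro x.
  apply propositional_extensionality, Hfg.
Qed.

Fixpoint dneg_free (p : formula) : Prop :=
  match p with
  | FAtom _ => True
  | FNeg q => dneg_free q /\ match q with FNeg _ => False | _ => True end
  | FAnd q1 q2 => dneg_free q1 /\ dneg_free q2
  end.

Lemma dneg_free_nf p : dneg_free (nf p).
Proof. induction p; simpl; auto; destruct (nf p); simpl in *; tauto. Qed.

Lemma sub_list_self p : dneg_free p -> In p (sub_list p).
Proof. destruct p as [|[]|]; simpl; tauto. Qed.

Lemma sub_list_fneg p q : dneg_free p -> In q (sub_list p) -> In (fneg q) (sub_list p).
Proof.
  induction p; simpl; intros Hp Hq; [| tauto |].
  - destruct Hq as [<-|[<-|[]]]; simpl; auto.
  - rewrite in_app_iff in *.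
    destruct Hq as [<-|[<-|[Hq|Hq]]]; simpl; tauto.
Qed.

Lemma sub_list_and p q1 q2 : dneg_free p -> In (FAnd q1 q2) (sub_list p) ->
  In q1 (sub_list p) /\ In q2 (sub_list p).
Proof.
  induction p; simpl; intros Hp Hq; [| tauto |].
  - destruct Hq as [|[|[]]]; discriminate.
  - rewrite !in_app_iff in *.
    destruct Hq as [Hq|[Hq|[Hq|Hq]]]; try discriminate.
    + injection Hq as <- <-.
      split; right; right; [left | right]; apply sub_list_self; tauto.
    + destruct (IHp1 (proj1 Hp) Hq); tauto.
    + destruct (IHp2 (proj2 Hp) Hq); tauto.
Qed.

Lemma sub_list_atoms p q al : In q (sub_list p) -> In al (atoms_of q) -> In al (atoms_of p).
Proof.
  induction p; simpl; intros Hq Hal; [| eauto |].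
  - destruct Hq as [<-|[<-|[]]]; auto.
  - rewrite in_app_iff in *.
    destruct Hq as [<-|[<-|[Hq|Hq]]]; simpl in Hal; rewrite ?in_app_iff in Hal; eauto.
Qed.

Lemma sub_list_atom p al : In al (atoms_of p) -> In (FAtom al) (sub_list p).
Proof.
  induction p; simpl; rewrite ?in_app_iff; [intros [<-|[]] | |]; tauto.
Qed.

Lemma Sub_self phi : In (nf phi) (Sub phi).
Proof. apply sub_list_self, dneg_free_nf. Qed.

Lemma Sub_fneg phi p : In p (Sub phi) -> In (fneg p) (Sub phi).
Proof. apply sub_list_fneg, dneg_free_nf. Qed.

Lemma Sub_and phi q1 q2 : In (FAnd q1 q2) (Sub phi) -> In q1 (Sub phi) /\ In q2 (Sub phi).
Proof. apply sub_list_and, dneg_free_nf. Qed.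

Lemma Sub_L_lit phi p : In p (Sub phi) -> L_lit phi p.
Proof. intros Hp al Hal; rewrite <- atoms_of_nf; eapply sub_list_atoms; eauto. Qed.

Lemma Sub_atom phi al : In al (atoms_of phi) -> In (FAtom al) (Sub phi).
Proof. intros Hal; apply sub_list_atom; rewrite atoms_of_nf; exact Hal. Qed.

Lemma lit_equiv_of_atoms phi I M :
  (forall al, In al (atoms_of phi) -> (sat_atom I al <-> sat_atom M al)) ->
  lit_equiv phi I M.
Proof.
  intros Hat p; induction p; simpl; intros Hp.
  - apply Hat, Hp; left; reflexivity.
  - rewrite IHp; tauto.
  - rewrite IHp1, IHp2; [tauto | |]; intros al Hal; apply Hp, in_app_iff; auto.
Qed.

Lemma lit_equiv_sat phi I M : lit_equiv phi I M -> (sat I phi <-> sat M phi).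
Proof. intros Heq; apply Heq; intros al Hal; exact Hal. Qed.

Lemma lit_equiv_qm_f phi I M :
  lit_equiv phi I M <-> (forall p, qm_f phi I p <-> qm_f phi M p).
Proof.
  unfold qm_f; split.
  - intros Heq p; split; intros [Hp Hs]; split; auto;
      apply (Heq p (Sub_L_lit _ _ Hp)); exact Hs.
  - intros Hqm; apply lit_equiv_of_atoms; intros al Hal.
    specialize (Hqm (FAtom al)); pose proof (Sub_atom _ _ Hal); simpl in Hqm; tauto.
Qed.

Lemma formula_type_eq_qm_f phi f I : formula_type phi f ->
  (forall p, f p -> is_literal p = true -> sat I p) ->
  forall p, f p <-> qm_f phi I p.
Proof.
  intros [Hsub [Hneg Hand]] Hlit.
  assert (Hagree : forall p, In p (Sub phi) -> (f p <-> sat I p)).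
  { induction p as [al|q IHq|q1 IHq1 q2 IHq2]; intros Hp.
    - split; [intros; apply Hlit; auto |].
      intros Hs; apply NNPP; intros Hn.
      assert (Hf : f (FNeg (FAtom al))) by (apply NNPP; rewrite <- (Hneg _ Hp); exact Hn).
      exact (Hlit _ Hf eq_refl Hs).
    - rewrite (Hneg _ Hp); simpl.
      rewrite (IHq (Sub_fneg _ _ Hp)); tauto.
    - destruct (Sub_and _ _ _ Hp) as [Hp1 Hp2]; simpl.
      rewrite (Hand _ _ Hp), (IHq1 Hp1), (IHq2 Hp2); tauto. }
  intros p; unfold qm_f; split.
  - intros Hf; pose proof (Hsub _ Hf); split; auto; apply Hagree; auto.
  - intros [Hp Hs]; apply Hagree; auto.
Qed.

Lemma qm_T_concept_type phi I c : qm_T phi I c -> concept_type phi c.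
Proof.
  intros [x Hx]; split; [| split].
  - intros D HD; apply Hx in HD; tauto.
  - intros D HD; rewrite !Hx, cint_cneg.
    pose proof (con_neg _ _ HD); tauto.
  - intros D E HDE; rewrite !Hx; simpl.
    pose proof (con_andl _ _ _ HDE); pose proof (con_andr _ _ _ HDE); tauto.
Qed.

Lemma qm_T_point phi I x : qm_T phi I (fun C => con phi C /\ cint I C x).
Proof. exists x; tauto. Qed.

Lemma qm_quasimodel phi I : sat I phi ->
  quasimodel phi (qm_T phi I) (qm_o phi I) (qm_f phi I).
Proof.
  intros HI.
  assert (Hneg_ex : forall r C, con phi (CNeg (CEx r C)) -> con phi (cneg C))
    by (intros r C H; apply con_neg, (con_ex _ r), con_negsub, H).
  split; [split; [| split; [| split; [| split; [| split]]]] | split; [| split; [| split]]].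
  - exact (qm_T_concept_type phi I).
  - intros a _; apply qm_T_point.
  - split; [| split]; unfold qm_f.
    + tauto.
    + intros p Hp; rewrite sat_fneg; pose proof (Sub_fneg _ _ Hp); tauto.
    + intros p q Hpq; destruct (Sub_and _ _ _ Hpq); simpl; tauto.
  - split; [apply Sub_self | apply sat_nf, HI].
  - intros C a [Hin Hs]; split; [eapply con_conc | ]; eauto.
  - intros r a b [_ Hr] C [HC Hs]; split; [eauto |].
    rewrite cint_cneg; intros HbC; apply Hs; exists (ind_int I b); auto.
  - intros c [x Hx] r D HD; apply Hx in HD as [HD [y [Hxy Hy]]].
    exists (fun C => con phi C /\ cint I C y); split; [apply qm_T_point |].
    split; [split; [apply (con_ex _ r) |] |]; auto.
    intros E HE; apply Hx in HE as [HE HxE]; split; [eauto |].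
    rewrite cint_cneg; intros HyE; apply HxE; exists y; auto.
  - intros c C [x Hx] HC [_ Htop]; apply Hx in HC as [_ HC].
    rewrite cint_cneg in HC; exact (HC (Htop x)).
  - intros C [_ Hs]; apply not_all_ex_not in Hs as [x Hx].
    exists (fun D => con phi D /\ cint I D x); split; [apply qm_T_point | tauto].
  - destruct (dom_inhabited I) as [x]; eexists; apply (qm_T_point _ _ x).
Qed.

Lemma ftypes_qm_f phi I : ftypes phi (qm_f phi I) <-> sat I phi.
Proof.
  split.
  - intros (T & o & [[_ [_ [_ [[_ Hnf] _]]]] _]); apply sat_nf, Hnf.
  - intros HI; exists (qm_T phi I), (qm_o phi I); apply qm_quasimodel, HI.
Qed.

Lemma bigAnd_sat I l : sat I (bigAnd l) <-> forall p, In p l -> sat I p.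
Proof.
  induction l as [|p [|q l] IH]; simpl in *.
  - tauto.
  - firstorder congruence.
  - rewrite IH; firstorder congruence.
Qed.

Lemma bigOr_sat I l : sat I (bigOr l) <-> exists p, In p l /\ sat I p.
Proof.
  induction l as [|p [|q l] IH].
  - simpl; firstorder.
  - simpl; firstorder congruence.
  - change (sat I (for_ p (bigOr (q :: l))) <-> exists r, In r (p :: q :: l) /\ sat I r).
    unfold for_; rewrite sat_fneg; simpl sat; rewrite !sat_fneg, IH.
    split; [intros Hn; apply NNPP |]; firstorder congruence.
Qed.

Lemma lit_conj_sat I S :
  sat I (lit_conj S) <-> forall p, In p S -> is_literal p = true -> sat I p.
Proof. unfold lit_conj; rewrite bigAnd_sat; setoid_rewrite filter_In; firstorder. Qed.

Lemma filter_in_sublists {A : Type} (g : A -> bool) l : In (filter g l) (sublists l).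
Proof.
  induction l as [|a l IH]; simpl; [auto |].
  destruct (g a); apply in_app_iff; [left; apply in_map |]; auto.
Qed.

Lemma in_qfilter_list phi M S : In S (qfilter_list phi M) <->
  In S (sublists (Sub phi)) /\ qfilter phi M (fun p => In p S).
Proof.
  unfold qfilter_list; rewrite filter_In.
  destruct (excluded_middle_informative _); intuition discriminate.
Qed.

Lemma Ccal_not_model phi M : ~ sat M phi -> Ccal phi M = phi.
Proof. unfold Ccal; destruct (excluded_middle_informative _); tauto. Qed.

Lemma Ccal_model_sat phi M I : sat M phi ->
  (sat I (Ccal phi M) <-> exists S, In S (qfilter_list phi M) /\ sat I (lit_conj S)).
Proof.
  intros HM; unfold Ccal; destruct (excluded_middle_informative _); [| contradiction].
  destruct (qfilter_list phi M) as [|S L]; [simpl; firstorder |].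
  rewrite bigOr_sat; setoid_rewrite in_map_iff; firstorder congruence.
Qed.

Lemma Ccal_model_sat_qfilter phi M I : sat M phi ->
  (sat I (Ccal phi M) <-> qfilter phi M (qm_f phi I)).
Proof.
  intros HM; rewrite Ccal_model_sat by exact HM; split.
  - intros (S & HS & Hlit); apply in_qfilter_list in HS as [_ Hq].
    assert (Hft : formula_type phi (fun p => In p S))
      by (destruct Hq as [(T & o & [[_ [_ [Hft _]]] _]) _]; exact Hft).
    rewrite lit_conj_sat in Hlit.
    rewrite <- (pred_ext _ _ (formula_type_eq_qm_f _ _ I Hft Hlit)); exact Hq.
  - intros Hq.
    set (S := filter (fun p => if excluded_middle_informative (sat I p) then true else false)
                     (Sub phi)).
    assert (HS : forall p, In p S <-> qm_f phi I p).
    { intros p; unfold S, qm_f; rewrite filter_In.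
      destruct (excluded_middle_informative _); intuition discriminate. }
    exists S; split.
    + apply in_qfilter_list; split; [apply filter_in_sublists |].
      rewrite (pred_ext _ _ HS); exact Hq.
    + apply lit_conj_sat; intros p Hp _; apply HS, Hp.
Qed.

Theorem mainTheorem16 (M : interp) (phi : formula) :
  forall I : interp,
    (Mod phi I /\ ~ lit_equiv phi I M) <-> Mod (Ccal phi M) I.
Proof.
  intros I; unfold Mod.
  destruct (classic (sat M phi)) as [HM | HM].
  - rewrite Ccal_model_sat_qfilter by exact HM; unfold qfilter.
    rewrite ftypes_qm_f, lit_equiv_qm_f; tauto.
  - rewrite Ccal_not_model by exact HM.
    split; [tauto |]; intros HI; split; [exact HI |].
    intros Heq; apply HM, (lit_equiv_sat _ _ _ Heq), HI.
Qed.
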